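(* Let $T=(T,\mu,\iota)$ be a normal lax double monad on an equipment $\mathcal K$. If the vertical morphism $g\colon C\to A$ has a left adjoint in the vertical $2$-category $V(\mathcal K)$, then the cell $\iota_{g^*}$ (where $g^*\colon A\nrightarrow C$ is the conjoint of $g$) satisfies the right Beck–Chevalley condition.
   Context: Double categories: a double category has objects, vertical morphisms (composition $\circ$), horizontal morphisms $J\colon A\nrightarrow B$ (composition $\odot$ in diagrammatic order, units $1_A$, weakly associative/unital) and cells with horizontal source $J\colon A\nrightarrow B$, horizontal target $K\colon C\nrightarrow D$, vertical sides $f\colon A\to C$, $g\colon B\to D$. Vertical cells (units as horizontal source and target) form, with objects and vertical morphisms, the $2$-category $V(\mathcal K)$. A cell $\phi\colon J\Rightarrow K$ with sides $f,g$ is cartesian if every cell $H\Rightarrow K$ with sides $f\circ h,g\circ k$ factors uniquely through $\phi$ via a cell $H\Rightarrow J$ with sides $h,k$; opcartesian dually. The companion of $f\colon A\to C$ is $f_*=1_C(f,\mathrm{id})\colon A\nrightarrow C$ (given by a cartesian cell $f_*\Rightarrow 1_C$ with sides $f,\mathrm{id}_C$, equivalently an opcartesian cell $1_A\Rightarrow f_*$ with sides $\mathrm{id}_A,f$); the conjoint of $g\colon C\to A$ is $g^*=1_A(\mathrm{id},g)\colon A\nrightarrow C$. An equipment has all companions and conjoints. A normal lax double monad $(T,\mu,\iota)$ on $\mathcal K$: a lax double functor $T\colon\mathcal K\to\mathcal K$ preserving vertical structure and horizontal units strictly and horizontal composition up to coherent compositor cells, with double transformations $\mu\colon T^2\Rightarrow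 T$, $\iota\colon\mathrm{id}\Rightarrow T$ satisfying the monad axioms; $\iota$ consists of vertical morphisms $\iota_A\colon A\to TA$ and cells $\iota_J\colon J\Rightarrow TJ$ with sides $\iota_A,\iota_B$, natural and compatible with compositors, $\iota_{1_A}=1_{\iota_A}$. Right Beck–Chevalley condition: for $J\colon A\nrightarrow B$ let $\iota_{J*}\colon J\odot\iota_{B*}\Rightarrow\iota_{A*}\odot TJ$ be the horizontal composite of the opcartesian cell $1_A\Rightarrow\iota_{A*}$ (sides $\mathrm{id}_A,\iota_A$), $\iota_J$, and the cartesian cell $\iota_{B*}\Rightarrow 1_{TB}$ (sides $\iota_B,\mathrm{id}_{TB}$); $\iota_J$ satisfies the right Beck–Chevalley condition if $\iota_{J*}$ is invertible. *)

(* no library of double categories exists, so we set up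
   (pseudo) double categories, equipments, normal lax double monads
   in a "flat" style: each kind of datum is a type equipped with boundary
   functions, and composition operations are total functions whose axioms
   are only imposed on composable data. *)
Set Implicit Arguments.
Unset Strict Implicit.

Record DoubleCat := {
  Ob : Type;
  Vm : Type;
  Hm : Type;
  Cl : Type;
  vdom : Vm -> Ob;  vcod : Vm -> Ob;
  vid : Ob -> Vm;
  vcomp : Vm -> Vm -> Vm;          (* vcomp g f = g o f *)
  hs : Hm -> Ob;  ht : Hm -> Ob;
  hunit : Ob -> Hm;
  hcomp : Hm -> Hm -> Hm;          (* hcomp J K = J (.) K, diagrammatic *)
  csrc : Cl -> Hm; ctgt : Cl -> Hm;
  cl : Cl -> Vm;  cr : Cl -> Vm;
  cid : Hm -> Cl;
  vcc : Cl -> Cl -> Cl;            (* vcc a b : a then b (vertical) *)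
  hid : Vm -> Cl;
  hcc : Cl -> Cl -> Cl;
  assoc : Hm -> Hm -> Hm -> Cl;   assoc_inv : Hm -> Hm -> Hm -> Cl;
  lunit : Hm -> Cl;  lunit_inv : Hm -> Cl;
  runit : Hm -> Cl;  runit_inv : Hm -> Cl;

  vid_dom : forall A, vdom (vid A) = A;
  vid_cod : forall A, vcod (vid A) = A;
  vcomp_dom : forall f g, vcod f = vdom g -> vdom (vcomp g f) = vdom f;
  vcomp_cod : forall f g, vcod f = vdom g -> vcod (vcomp g f) = vcod g;
  vcomp_id_r : forall f, vcomp f (vid (vdom f)) = f;
  vcomp_id_l : forall f, vcomp (vid (vcod f)) f = f;
  vcomp_assoc : forall f g h, vcod f = vdom g -> vcod g = vdom h ->
    vcomp h (vcomp g f) = vcomp (vcomp h g) f;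

  hunit_s : forall A, hs (hunit A) = A;
  hunit_t : forall A, ht (hunit A) = A;
  hcomp_s : forall J K, ht J = hs K -> hs (hcomp J K) = hs J;
  hcomp_t : forall J K, ht J = hs K -> ht (hcomp J K) = ht K;

  cl_dom : forall a, vdom (cl a) = hs (csrc a);
  cl_cod : forall a, vcod (cl a) = hs (ctgt a);
  cr_dom : forall a, vdom (cr a) = ht (csrc a);
  cr_cod : forall a, vcod (cr a) = ht (ctgt a);

  cid_src : forall J, csrc (cid J) = J;
  cid_tgt : forall J, ctgt (cid J) = J;
  cid_l : forall J, cl (cid J) = vid (hs J);
  cid_r : forall J, cr (cid J) = vid (ht J);
  vcc_src : forall a b, ctgt a = csrc b -> csrc (vcc a b) = csrc a;
  vcc_tgt : forall a b, ctgt a = csrc b -> ctgt (vcc a b) = ctgt b;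
  vcc_l : forall a b, ctgt a = csrc b -> cl (vcc a b) = vcomp (cl b) (cl a);
  vcc_r : forall a b, ctgt a = csrc b -> cr (vcc a b) = vcomp (cr b) (cr a);
  vcc_id_l : forall a, vcc (cid (csrc a)) a = a;
  vcc_id_r : forall a, vcc a (cid (ctgt a)) = a;
  vcc_assoc : forall a b c, ctgt a = csrc b -> ctgt b = csrc c ->
    vcc a (vcc b c) = vcc (vcc a b) c;

  hid_src : forall f, csrc (hid f) = hunit (vdom f);
  hid_tgt : forall f, ctgt (hid f) = hunit (vcod f);
  hid_l : forall f, cl (hid f) = f;
  hid_r : forall f, cr (hid f) = f;
  hid_vid : forall A, hid (vid A) = cid (hunit A);
  hid_vcomp : forall f g, vcod f = vdom g ->
    vcc (hid f) (hid g) = hid (vcomp g f);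

  hcc_src : forall a b, cr a = cl b -> csrc (hcc a b) = hcomp (csrc a) (csrc b);
  hcc_tgt : forall a b, cr a = cl b -> ctgt (hcc a b) = hcomp (ctgt a) (ctgt b);
  hcc_l : forall a b, cr a = cl b -> cl (hcc a b) = cl a;
  hcc_r : forall a b, cr a = cl b -> cr (hcc a b) = cr b;
  hcc_cid : forall J K, ht J = hs K -> hcc (cid J) (cid K) = cid (hcomp J K);
  interchange : forall a b a' b', cr a = cl b -> cr a' = cl b' ->
    ctgt a = csrc a' -> ctgt b = csrc b' ->
    vcc (hcc a b) (hcc a' b') = hcc (vcc a a') (vcc b b');

  assoc_src : forall J K L, ht J = hs K -> ht K = hs L ->
    csrc (assoc J K L) = hcomp (hcomp J K) L;
  assoc_tgt : forall J K L, ht J = hs K -> ht K = hs L ->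
    ctgt (assoc J K L) = hcomp J (hcomp K L);
  assoc_l : forall J K L, ht J = hs K -> ht K = hs L -> cl (assoc J K L) = vid (hs J);
  assoc_r : forall J K L, ht J = hs K -> ht K = hs L -> cr (assoc J K L) = vid (ht L);
  assoc_inv_src : forall J K L, ht J = hs K -> ht K = hs L ->
    csrc (assoc_inv J K L) = hcomp J (hcomp K L);
  assoc_inv_tgt : forall J K L, ht J = hs K -> ht K = hs L ->
    ctgt (assoc_inv J K L) = hcomp (hcomp J K) L;
  assoc_inv_l : forall J K L, ht J = hs K -> ht K = hs L ->
    cl (assoc_inv J K L) = vid (hs J);
  assoc_inv_r : forall J K L, ht J = hs K -> ht K = hs L ->
    cr (assoc_inv J K L) = vid (ht L);
  assoc_iso1 : forall J K L, ht J = hs K -> ht K = hs L ->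
    vcc (assoc J K L) (assoc_inv J K L) = cid (hcomp (hcomp J K) L);
  assoc_iso2 : forall J K L, ht J = hs K -> ht K = hs L ->
    vcc (assoc_inv J K L) (assoc J K L) = cid (hcomp J (hcomp K L));
  assoc_nat : forall a b c, cr a = cl b -> cr b = cl c ->
    vcc (hcc (hcc a b) c) (assoc (ctgt a) (ctgt b) (ctgt c))
    = vcc (assoc (csrc a) (csrc b) (csrc c)) (hcc a (hcc b c));

  lunit_src : forall J, csrc (lunit J) = hcomp (hunit (hs J)) J;
  lunit_tgt : forall J, ctgt (lunit J) = J;
  lunit_l : forall J, cl (lunit J) = vid (hs J);
  lunit_r : forall J, cr (lunit J) = vid (ht J);
  lunit_inv_src : forall J, csrc (lunit_inv J) = J;
  lunit_inv_tgt : forall J, ctgt (lunit_inv J) = hcomp (hunit (hs J)) J;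
  lunit_inv_l : forall J, cl (lunit_inv J) = vid (hs J);
  lunit_inv_r : forall J, cr (lunit_inv J) = vid (ht J);
  lunit_iso1 : forall J, vcc (lunit J) (lunit_inv J) = cid (hcomp (hunit (hs J)) J);
  lunit_iso2 : forall J, vcc (lunit_inv J) (lunit J) = cid J;
  lunit_nat : forall a,
    vcc (hcc (hid (cl a)) a) (lunit (ctgt a)) = vcc (lunit (csrc a)) a;

  runit_src : forall J, csrc (runit J) = hcomp J (hunit (ht J));
  runit_tgt : forall J, ctgt (runit J) = J;
  runit_l : forall J, cl (runit J) = vid (hs J);
  runit_r : forall J, cr (runit J) = vid (ht J);
  runit_inv_src : forall J, csrc (runit_inv J) = J;
  runit_inv_tgt : forall J, ctgt (runit_inv J) = hcomp J (hunit (ht J));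
  runit_inv_l : forall J, cl (runit_inv J) = vid (hs J);
  runit_inv_r : forall J, cr (runit_inv J) = vid (ht J);
  runit_iso1 : forall J, vcc (runit J) (runit_inv J) = cid (hcomp J (hunit (ht J)));
  runit_iso2 : forall J, vcc (runit_inv J) (runit J) = cid J;
  runit_nat : forall a,
    vcc (hcc a (hid (cr a))) (runit (ctgt a)) = vcc (runit (csrc a)) a;

  pentagon : forall J K L M, ht J = hs K -> ht K = hs L -> ht L = hs M ->
    vcc (assoc (hcomp J K) L M) (assoc J K (hcomp L M))
    = vcc (vcc (hcc (assoc J K L) (cid M)) (assoc J (hcomp K L) M))
          (hcc (cid J) (assoc K L M));
  triangle : forall J K, ht J = hs K ->
    vcc (assoc J (hunit (ht J)) K) (hcc (cid J) (lunit K))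
    = hcc (runit J) (cid K)
}.

Section DoubleCatNotions.
Variable D : DoubleCat.

Definition cartesian (a : Cl D) : Prop :=
  forall (x : Cl D) (h k : Vm D),
    ctgt x = ctgt a -> vcod h = vdom (cl a) -> vcod k = vdom (cr a) ->
    cl x = vcomp (cl a) h -> cr x = vcomp (cr a) k ->
    exists! t : Cl D, csrc t = csrc x /\ ctgt t = csrc a /\
                      cl t = h /\ cr t = k /\ vcc t a = x.

Definition opcartesian (a : Cl D) : Prop :=
  forall (x : Cl D) (h k : Vm D),
    csrc x = csrc a -> vdom h = vcod (cl a) -> vdom k = vcod (cr a) ->
    cl x = vcomp h (cl a) -> cr x = vcomp k (cr a) ->
    exists! t : Cl D, csrc t = ctgt a /\ ctgt t = ctgt x /\
                      cl t = h /\ cr t = k /\ vcc a t = x.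

Definition invertible_cell (a : Cl D) : Prop :=
  exists b : Cl D, csrc b = ctgt a /\ ctgt b = csrc a /\
    vcc a b = cid (csrc a) /\ vcc b a = cid (ctgt a).

(* vertical 2-category V(D): 2-cells f => g are cells 1_A => 1_B with sides f, g;
   whiskering is vcc; vertical composition of 2-cells is the horizontal
   composite of cells, followed by the unitors 1_A (.) 1_A ~ 1_A *)
Definition v2comp (a b : Cl D) : Cl D :=
  vcc (vcc (lunit_inv (csrc a)) (hcc a b)) (lunit (ctgt b)).

Definition has_left_adjoint (g : Vm D) : Prop :=
  exists (f : Vm D) (eta eps : Cl D),
    vdom f = vcod g /\ vcod f = vdom g /\
    csrc eta = hunit (vcod g) /\ ctgt eta = hunit (vcod g) /\
    cl eta = vid (vcod g) /\ cr eta = vcomp g f /\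
    csrc eps = hunit (vdom g) /\ ctgt eps = hunit (vdom g) /\
    cl eps = vcomp f g /\ cr eps = vid (vdom g) /\
    v2comp (vcc eta (hid f)) (vcc (hid f) eps) = hid f /\
    v2comp (vcc (hid g) eta) (vcc eps (hid g)) = hid g.

End DoubleCatNotions.

Record Equipment := {
  eK :> DoubleCat;
  companion : Vm eK -> Hm eK;
  compR : Vm eK -> Cl eK;
  compL : Vm eK -> Cl eK;
  conjoint : Vm eK -> Hm eK;
  conjR : Vm eK -> Cl eK;
  compR_src : forall f, csrc (compR f) = companion f;
  compR_tgt : forall f, ctgt (compR f) = hunit (vcod f);
  compR_l : forall f, cl (compR f) = f;
  compR_r : forall f, cr (compR f) = vid (vcod f);
  compR_cart : forall f, cartesian (compR f);
  compL_src : forall f, csrc (compL f) = hunit (vdom f);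
  compL_tgt : forall f, ctgt (compL f) = companion f;
  compL_l : forall f, cl (compL f) = vid (vdom f);
  compL_r : forall f, cr (compL f) = f;
  compL_opcart : forall f, opcartesian (compL f);
  compLR : forall f, vcc (compL f) (compR f) = hid f;
  conjR_src : forall g, csrc (conjR g) = conjoint g;
  conjR_tgt : forall g, ctgt (conjR g) = hunit (vcod g);
  conjR_l : forall g, cl (conjR g) = vid (vcod g);
  conjR_r : forall g, cr (conjR g) = g;
  conjR_cart : forall g, cartesian (conjR g)
}.

Record LaxData (D : DoubleCat) := {
  FO : Ob D -> Ob D;
  FV : Vm D -> Vm D;
  FH : Hm D -> Hm D;
  FC : Cl D -> Cl D;
  Fcmp : Hm D -> Hm D -> Cl D
}.

Record is_normal_lax (D : DoubleCat) (F : LaxData D) : Prop := {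
  FV_dom : forall f, vdom (FV F f) = FO F (vdom f);
  FV_cod : forall f, vcod (FV F f) = FO F (vcod f);
  FV_id : forall A, FV F (vid A) = vid (FO F A);
  FV_comp : forall f g, vcod f = vdom g -> FV F (vcomp g f) = vcomp (FV F g) (FV F f);
  FH_s : forall J, hs (FH F J) = FO F (hs J);
  FH_t : forall J, ht (FH F J) = FO F (ht J);
  FH_unit : forall A, FH F (hunit A) = hunit (FO F A);
  FC_src : forall a, csrc (FC F a) = FH F (csrc a);
  FC_tgt : forall a, ctgt (FC F a) = FH F (ctgt a);
  FC_l : forall a, cl (FC F a) = FV F (cl a);
  FC_r : forall a, cr (FC F a) = FV F (cr a);
  FC_cid : forall J, FC F (cid J) = cid (FH F J);
  FC_vcc : forall a b, ctgt a = csrc b -> FC F (vcc a b) = vcc (FC F a) (FC F b);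
  FC_hid : forall f, FC F (hid f) = hid (FV F f);
  Fcmp_src : forall J K, ht J = hs K -> csrc (Fcmp F J K) = hcomp (FH F J) (FH F K);
  Fcmp_tgt : forall J K, ht J = hs K -> ctgt (Fcmp F J K) = FH F (hcomp J K);
  Fcmp_l : forall J K, ht J = hs K -> cl (Fcmp F J K) = vid (FO F (hs J));
  Fcmp_r : forall J K, ht J = hs K -> cr (Fcmp F J K) = vid (FO F (ht K));
  Fcmp_nat : forall a b, cr a = cl b ->
    vcc (hcc (FC F a) (FC F b)) (Fcmp F (ctgt a) (ctgt b))
    = vcc (Fcmp F (csrc a) (csrc b)) (FC F (hcc a b));
  Fcmp_assoc : forall J K L, ht J = hs K -> ht K = hs L ->
    vcc (vcc (hcc (Fcmp F J K) (cid (FH F L))) (Fcmp F (hcomp J K) L))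
        (FC F (assoc J K L))
    = vcc (vcc (assoc (FH F J) (FH F K) (FH F L))
               (hcc (cid (FH F J)) (Fcmp F K L)))
          (Fcmp F J (hcomp K L));
  Fcmp_lunit : forall J,
    vcc (Fcmp F (hunit (hs J)) J) (FC F (lunit J)) = lunit (FH F J);
  Fcmp_runit : forall J,
    vcc (Fcmp F J (hunit (ht J))) (FC F (runit J)) = runit (FH F J)
}.

Definition lax_id (D : DoubleCat) : LaxData D :=
  {| FO := fun A => A; FV := fun f => f; FH := fun J => J; FC := fun a => a;
     Fcmp := fun J K => cid (hcomp J K) |}.

Definition lax_comp (D : DoubleCat) (F G : LaxData D) : LaxData D :=
  {| FO := fun A => FO F (FO G A); FV := fun f => FV F (FV G f);
     FH := fun J => FH F (FH G J); FC := fun a => FC F (FC G a);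
     Fcmp := fun J K => vcc (Fcmp F (FH G J) (FH G K)) (FC F (Fcmp G J K)) |}.

Record is_dtrans (D : DoubleCat) (F G : LaxData D)
    (aO : Ob D -> Vm D) (aC : Hm D -> Cl D) : Prop := {
  tr_dom : forall A, vdom (aO A) = FO F A;
  tr_cod : forall A, vcod (aO A) = FO G A;
  tr_src : forall J, csrc (aC J) = FH F J;
  tr_tgt : forall J, ctgt (aC J) = FH G J;
  tr_l : forall J, cl (aC J) = aO (hs J);
  tr_r : forall J, cr (aC J) = aO (ht J);
  tr_natV : forall f, vcomp (aO (vcod f)) (FV F f) = vcomp (FV G f) (aO (vdom f));
  tr_natC : forall a, vcc (FC F a) (aC (ctgt a)) = vcc (aC (csrc a)) (FC G a);
  tr_unit : forall A, aC (hunit A) = hid (aO A);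
  tr_comp : forall J K, ht J = hs K ->
    vcc (Fcmp F J K) (aC (hcomp J K)) = vcc (hcc (aC J) (aC K)) (Fcmp G J K)
}.

Record NLaxDoubleMonad (D : DoubleCat) := {
  Tm : LaxData D;
  Tm_lax : is_normal_lax Tm;
  muO : Ob D -> Vm D;  muC : Hm D -> Cl D;
  iotaO : Ob D -> Vm D;  iotaC : Hm D -> Cl D;
  mu_trans : is_dtrans (lax_comp Tm Tm) Tm muO muC;
  iota_trans : is_dtrans (lax_id D) Tm iotaO iotaC;
  mon_assocO : forall A, vcomp (muO A) (FV Tm (muO A)) = vcomp (muO A) (muO (FO Tm A));
  mon_assocC : forall J, vcc (FC Tm (muC J)) (muC J) = vcc (muC (FH Tm J)) (muC J);
  mon_unitO1 : forall A, vcomp (muO A) (iotaO (FO Tm A)) = vid (FO Tm A);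
  mon_unitO2 : forall A, vcomp (muO A) (FV Tm (iotaO A)) = vid (FO Tm A);
  mon_unitC1 : forall J, vcc (iotaC (FH Tm J)) (muC J) = cid (FH Tm J);
  mon_unitC2 : forall J, vcc (FC Tm (iotaC J)) (muC J) = cid (FH Tm J)
}.

(* iota_{J*} : J (.) iota_{B*} => iota_{A*} (.) TJ is the horizontal   *)
(* composite  (1_A => iota_{A*}) | iota_J | (iota_{B*} => 1_{TB}),      *)
(* made globular-typed by the unitors.                                  *)
Definition iota_lower (E : Equipment) (M : NLaxDoubleMonad E) (J : Hm E) : Cl E :=
  let iA := iotaO M (hs J) in
  let iB := iotaO M (ht J) in
  vcc (vcc (hcc (lunit_inv J) (cid (companion iB)))
           (hcc (hcc (compL iA) (iotaC M J)) (compR iB)))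
      (runit (hcomp (companion iA) (FH (Tm M) J))).

Definition right_BC (E : Equipment) (M : NLaxDoubleMonad E) (J : Hm E) : Prop :=
  invertible_cell (iota_lower M J).

Set Implicit Arguments.
Unset Strict Implicit.

(* If f -| g in V(K), the conjoint g^* is a companion of f: its unit cell 1 => g^* is the
   cartesian lift of the unit of the adjunction through g^* => 1, its counit is built from
   the counit of the adjunction, and the triangle identities become the companion identities.
   For a horizontal morphism J : A -/-> B with a companion structure, iota_{J*} compares two
   opcartesian cells out of 1_A: the unit of J followed by the unit of iota_{B*}, and the unit
   of iota_{A*} followed by the T-image of the unit of J, which is again opcartesian because a
   normal lax functor preserves companion structures. A globular comparison between
   opcartesian cells with the same source is invertible. *)

Section IdentityLaws.
Variable D : DoubleCat.
Implicit Types (a : Cl D) (f : Vm D) (J : Hm D) (A : Ob D).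

Lemma vcomp_vid_l f A : vcod f = A -> vcomp (vid A) f = f.
Proof. intros <-; apply vcomp_id_l. Qed.

Lemma vcomp_vid_r f A : vdom f = A -> vcomp f (vid A) = f.
Proof. intros <-; apply vcomp_id_r. Qed.

Lemma vcc_cid_l a J : csrc a = J -> vcc (cid J) a = a.
Proof. intros <-; apply vcc_id_l. Qed.

Lemma vcc_cid_r a J : ctgt a = J -> vcc a (cid J) = a.
Proof. intros <-; apply vcc_id_r. Qed.

End IdentityLaws.

Section EquipmentBoundaries.
Variable E : Equipment.
Implicit Types (f g : Vm E).

Lemma hs_companion f : hs (companion f) = vdom f.
Proof. now rewrite <- (compR_src f), <- cl_dom, compR_l. Qed.

Lemma ht_companion f : ht (companion f) = vcod f.
Proof. now rewrite <- (compR_src f), <- cr_dom, compR_r, vid_dom. Qed.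

Lemma hs_conjoint g : hs (conjoint g) = vcod g.
Proof. now rewrite <- (conjR_src g), <- cl_dom, conjR_l, vid_dom. Qed.

Lemma ht_conjoint g : ht (conjoint g) = vdom g.
Proof. now rewrite <- (conjR_src g), <- cr_dom, conjR_r. Qed.

End EquipmentBoundaries.

Section MonadBoundaries.
Variables (D : DoubleCat) (M : NLaxDoubleMonad D).

Lemma iotaO_dom A : vdom (iotaO M A) = A.
Proof. exact (tr_dom (iota_trans M) A). Qed.

Lemma iotaO_cod A : vcod (iotaO M A) = FO (Tm M) A.
Proof. exact (tr_cod (iota_trans M) A). Qed.

Lemma iotaC_src J : csrc (iotaC M J) = J.
Proof. exact (tr_src (iota_trans M) J). Qed.

Lemma iotaC_tgt J : ctgt (iotaC M J) = FH (Tm M) J.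
Proof. exact (tr_tgt (iota_trans M) J). Qed.

Lemma iotaC_l J : cl (iotaC M J) = iotaO M (hs J).
Proof. exact (tr_l (iota_trans M) J). Qed.

Lemma iotaC_r J : cr (iotaC M J) = iotaO M (ht J).
Proof. exact (tr_r (iota_trans M) J). Qed.

Lemma iotaC_unit A : iotaC M (hunit A) = hid (iotaO M A).
Proof. exact (tr_unit (iota_trans M) A). Qed.

End MonadBoundaries.

(* The composition laws of a double category only hold under boundary side conditions;
   [boundary] proves such boundary equations by rewriting with the boundary laws and the
   boundary facts in the context. *)
Ltac boundary_step rw rwc :=
  first
  [ rw vid_dom | rw vid_cod | rw hunit_s | rw hunit_t
  | rw cid_src | rw cid_tgt | rw cid_l | rw cid_r | rw hid_src | rw hid_tgt | rw hid_l | rw hid_r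
  | rw lunit_src | rw lunit_tgt | rw lunit_l | rw lunit_r
  | rw lunit_inv_src | rw lunit_inv_tgt | rw lunit_inv_l | rw lunit_inv_r
  | rw runit_src | rw runit_tgt | rw runit_l | rw runit_r
  | rw runit_inv_src | rw runit_inv_tgt | rw runit_inv_l | rw runit_inv_r
  | rw cl_dom | rw cl_cod | rw cr_dom | rw cr_cod | rw hid_vid
  | rw compR_src | rw compR_tgt | rw compR_l | rw compR_r
  | rw compL_src | rw compL_tgt | rw compL_l | rw compL_r
  | rw conjR_src | rw conjR_tgt | rw conjR_l | rw conjR_r
  | rw hs_companion | rw ht_companion | rw hs_conjoint | rw ht_conjoint
  | rw iotaO_dom | rw iotaO_cod | rw iotaC_src | rw iotaC_tgt | rw iotaC_l | rw iotaC_r | rw iotaC_unit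
  | rwc FV_dom | rwc FV_cod | rwc FV_id | rwc FH_s | rwc FH_t | rwc FH_unit
  | rwc FC_src | rwc FC_tgt | rwc FC_l | rwc FC_r | rwc FC_hid | rwc FC_cid
  | rwc vcomp_dom | rwc vcomp_cod | rwc hcomp_s | rwc hcomp_t
  | rwc vcc_src | rwc vcc_tgt | rwc vcc_l | rwc vcc_r
  | rwc hcc_src | rwc hcc_tgt | rwc hcc_l | rwc hcc_r
  | rwc assoc_src | rwc assoc_tgt | rwc assoc_l | rwc assoc_r
  | rwc assoc_inv_src | rwc assoc_inv_tgt | rwc assoc_inv_l | rwc assoc_inv_r
  | rwc Fcmp_src | rwc Fcmp_tgt | rwc Fcmp_l | rwc Fcmp_r
  | rwc vcomp_vid_l | rwc vcomp_vid_r | rwc vcomp_assoc ].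

Ltac boundary_hyp :=
  match goal with H : ?l = ?r |- context [?l] =>
    match l with
    | csrc _ => idtac | ctgt _ => idtac | cl _ => idtac | cr _ => idtac
    | hs _ => idtac | ht _ => idtac | vdom _ => idtac | vcod _ => idtac
    end; tryif constr_eq l r then fail else rewrite H end.

Ltac boundary_hyp_in H :=
  match goal with H' : ?l = ?r |- _ =>
    match l with
    | csrc _ => idtac | ctgt _ => idtac | cl _ => idtac | cr _ => idtac
    | hs _ => idtac | ht _ => idtac | vdom _ => idtac | vcod _ => idtac
    end;
    tryif constr_eq H' H then fail else tryif constr_eq l r then fail else
    match type of H with context [l] => rewrite H' in H end end.

Ltac boundary_cheap :=
  match goal with
  | |- is_normal_lax _ => first [assumption | apply Tm_lax]
  | _ => boundary_simpl; first [reflexivity | assumption | symmetry; assumption]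
  end
with boundary_simpl :=
  repeat first [ boundary_hyp
               | boundary_step ltac:(fun l => rewrite l) ltac:(fun l => rewrite l by boundary_cheap) ]
with boundary_simpl_in H :=
  repeat first [ boundary_step ltac:(fun l => rewrite l in H) ltac:(fun l => rewrite l in H by boundary_cheap)
               | boundary_hyp_in H ].

(* A side [cl x = e] also fixes the boundary of [e]; these derived equations
   are what closes goals about the domain or codomain of such an [e]. *)
Ltac learn_side_boundaries :=
  repeat match goal with
  | H : cr ?x = ?e |- _ =>
      let P1 := fresh "P" in let P2 := fresh "P" in
      assert (P1 : vdom e = ht (csrc x)) by (rewrite <- H; apply cr_dom);
      assert (P2 : vcod e = ht (ctgt x)) by (rewrite <- H; apply cr_cod);
      revert H; boundary_simpl_in P1; boundary_simpl_in P2
  | H : cl ?x = ?e |- _ =>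
      let P1 := fresh "P" in let P2 := fresh "P" in
      assert (P1 : vdom e = hs (csrc x)) by (rewrite <- H; apply cl_dom);
      assert (P2 : vcod e = hs (ctgt x)) by (rewrite <- H; apply cl_cod);
      revert H; boundary_simpl_in P1; boundary_simpl_in P2
  end; intros;
  repeat match goal with
  | H : vcod (vcomp _ _) = _ |- _ => progress boundary_simpl_in H
  | H : vdom (vcomp _ _) = _ |- _ => progress boundary_simpl_in H end.

(* Proving composability once per composite subterm and recording its four boundaries
   avoids re-solving the nested side conditions of [vcc_src], [hcc_src], ... at every use. *)
Ltac learn_boundaries t :=
  lazymatch t with
  | vcc ?a ?b =>
      learn_boundaries a; learn_boundaries b;
      lazymatch goal with
      | _ : csrc t = _ |- _ => idtac
      | _ => try (let H := fresh in assert (H : ctgt a = csrc b) by boundary_cheap;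
                  pose proof (vcc_src H); pose proof (vcc_tgt H);
                  pose proof (vcc_l H); pose proof (vcc_r H); clear H)
      end
  | hcc ?a ?b =>
      learn_boundaries a; learn_boundaries b;
      lazymatch goal with
      | _ : csrc t = _ |- _ => idtac
      | _ => try (let H := fresh in assert (H : cr a = cl b) by boundary_cheap;
                  pose proof (hcc_src H); pose proof (hcc_tgt H);
                  pose proof (hcc_l H); pose proof (hcc_r H); clear H)
      end
  | ?f ?x => learn_boundaries f; learn_boundaries x
  | _ => idtac
  end.

Ltac learn_goal_boundaries := match goal with |- ?l = ?r => learn_boundaries l; learn_boundaries r end.

Ltac boundary :=
  match goal with
  | |- @eq (Cl _) _ _ => fail 1
  | |- is_normal_lax _ => boundary_cheap
  | _ => first [ learn_goal_boundaries; boundary_cheap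
               | learn_side_boundaries; learn_goal_boundaries; boundary_simpl; congruence ]
  end.

Notation "a ;; b" := (vcc a b) (at level 50, left associativity).
Notation "a ** b" := (hcc a b) (at level 40, left associativity).

Section CellAlgebra.
Variable D : DoubleCat.
Implicit Types (a b c x y : Cl D) (f g h k : Vm D) (J K L : Hm D) (A B X Y Z : Ob D).

Lemma runit_inv_runit_vcc a J : csrc a = J -> runit_inv J ;; (runit J ;; a) = a.
Proof. intros <-. rewrite vcc_assoc, runit_iso2, vcc_id_l by boundary. reflexivity. Qed.

Lemma lunit_inv_lunit_vcc a J : csrc a = J -> lunit_inv J ;; (lunit J ;; a) = a.
Proof. intros <-. rewrite vcc_assoc, lunit_iso2, vcc_id_l by boundary. reflexivity. Qed.

Lemma lunit_lunit_inv_vcc a J : csrc a = hcomp (hunit (hs J)) J -> lunit J ;; (lunit_inv J ;; a) = a.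
Proof. intros H. rewrite vcc_assoc, lunit_iso1, <- H, vcc_id_l by boundary. reflexivity. Qed.

Lemma assoc_inv_assoc_vcc a J K L : ht J = hs K -> ht K = hs L -> csrc a = hcomp J (hcomp K L) ->
  assoc_inv J K L ;; (assoc J K L ;; a) = a.
Proof. intros H1 H2 H3. rewrite vcc_assoc, assoc_iso2, vcc_cid_l by boundary. reflexivity. Qed.

Lemma runit_iso1_at J A : ht J = A -> runit J ;; runit_inv J = cid (hcomp J (hunit A)).
Proof. intros <-; apply runit_iso1. Qed.

Lemma lunit_iso1_at J A : hs J = A -> lunit J ;; lunit_inv J = cid (hcomp (hunit A) J).
Proof. intros <-; apply lunit_iso1. Qed.

Lemma vcc_cancel_r x y i j : i ;; j = cid (csrc i) -> ctgt i = csrc j ->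
  ctgt x = csrc i -> ctgt y = csrc i -> x ;; i = y ;; i -> x = y.
Proof.
  intros Hij Hc Hx Hy E.
  rewrite <- (vcc_cid_r Hx), <- (vcc_cid_r Hy), <- Hij.
  rewrite !vcc_assoc, E by congruence. reflexivity.
Qed.

Lemma vcc_cancel_l x y i j : j ;; i = cid (ctgt i) -> ctgt j = csrc i ->
  csrc x = ctgt i -> csrc y = ctgt i -> i ;; x = i ;; y -> x = y.
Proof.
  intros Hij Hc Hx Hy E.
  rewrite <- (vcc_cid_l Hx), <- (vcc_cid_l Hy), <- Hij.
  rewrite <- !vcc_assoc, E by congruence. reflexivity.
Qed.

Lemma hcc_vcc_r_split_top a b1 b2 : cl b1 = vid (ht (csrc a)) -> cr a = cl b2 -> ctgt b1 = csrc b2 ->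
  a ** (b1 ;; b2) = (cid (csrc a) ** b1) ;; (a ** b2).
Proof. intros H1 H2 H3. rewrite interchange, vcc_cid_l by boundary. reflexivity. Qed.

Lemma hcc_vcc_r_split_bot a b1 b2 : cl b2 = vid (ht (ctgt a)) -> cr a = cl b1 -> ctgt b1 = csrc b2 ->
  a ** (b1 ;; b2) = (a ** b1) ;; (cid (ctgt a) ** b2).
Proof. intros H1 H2 H3. rewrite interchange, vcc_cid_r by boundary. reflexivity. Qed.

Lemma hcc_vcc_l_split_top a1 a2 b : cr a1 = vid (hs (csrc b)) -> cr a2 = cl b -> ctgt a1 = csrc a2 ->
  (a1 ;; a2) ** b = (a1 ** cid (csrc b)) ;; (a2 ** b).
Proof. intros H1 H2 H3. rewrite interchange, vcc_cid_l by boundary. reflexivity. Qed.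

Lemma hcc_vcc_l_split_bot a1 a2 b : cr a2 = vid (hs (ctgt b)) -> cr a1 = cl b -> ctgt a1 = csrc a2 ->
  (a1 ;; a2) ** b = (a1 ** b) ;; (a2 ** cid (ctgt b)).
Proof. intros H1 H2 H3. rewrite interchange, vcc_cid_r by boundary. reflexivity. Qed.

Lemma cid_hcc_vcc J x y : cl x = vid (ht J) -> cl y = vid (ht J) -> ctgt x = csrc y ->
  (cid J ** x) ;; (cid J ** y) = cid J ** (x ;; y).
Proof. intros H1 H1' H2. rewrite interchange, vcc_cid_l by boundary. reflexivity. Qed.

Lemma hcc_cid_vcc J x y : cr x = vid (hs J) -> cr y = vid (hs J) -> ctgt x = csrc y ->
  (x ** cid J) ;; (y ** cid J) = (x ;; y) ** cid J.
Proof. intros H1 H1' H2. rewrite interchange, vcc_cid_l by boundary. reflexivity. Qed.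

End CellAlgebra.

#[export] Hint Rewrite <- vcc_assoc using boundary : cells.
#[export] Hint Rewrite vcc_cid_l vcc_cid_r
  runit_inv_runit_vcc lunit_inv_lunit_vcc lunit_lunit_inv_vcc
  assoc_inv_assoc_vcc assoc_iso1 assoc_iso2
  cid_hcc_vcc hcc_cid_vcc hcc_cid using boundary : cells.
#[export] Hint Rewrite runit_iso1 runit_iso2 lunit_iso1 lunit_iso2 : cells.

Ltac cell_simpl := autorewrite with cells.
Ltac cell_simpl_in H := autorewrite with cells in H.

Lemma vcc_assoc_eq (D : DoubleCat) (a b c r : Cl D) :
  a ;; b = c -> ctgt a = csrc b -> ctgt b = csrc r -> a ;; (b ;; r) = c ;; r.
Proof. intros E H1 H2. rewrite vcc_assoc, E by assumption. reflexivity. Qed.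

Lemma vcc_assoc_eq3 (D : DoubleCat) (a b c e r : Cl D) :
  a ;; (b ;; c) = e -> ctgt a = csrc b -> ctgt b = csrc c -> ctgt c = csrc r ->
  a ;; (b ;; (c ;; r)) = e ;; r.
Proof. intros E H1 H2 H3. rewrite (vcc_assoc (a := b)), (vcc_assoc (a := a)), E by boundary. reflexivity. Qed.

Ltac rewrite_vcc N :=
  first [ rewrite N | rewrite (vcc_assoc_eq N) by boundary | rewrite (vcc_assoc_eq3 N) by boundary ].

Section Unitors.
Variable D : DoubleCat.
Implicit Types (a b c x y : Cl D) (f g h k : Vm D) (J K L : Hm D) (A B X Y Z : Ob D).

Lemma hcc_cid_hunit_inj a b Y :
  cr a = vid Y -> cr b = vid Y -> csrc a = csrc b -> ctgt a = ctgt b ->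
  a ** cid (hunit Y) = b ** cid (hunit Y) -> a = b.
Proof.
  intros Ha Hb Hs Ht E.
  assert (Ea := runit_nat a). assert (Eb := runit_nat b).
  rewrite Ha, hid_vid, E in Ea. rewrite Hb, hid_vid in Eb.
  rewrite Hs, Ht in Ea. rewrite Ea in Eb.
  rewrite <- (@runit_inv_runit_vcc D a (csrc a)), <- (@runit_inv_runit_vcc D b (csrc b)) by reflexivity.
  congruence.
Qed.

Lemma cid_hunit_hcc_inj a b Y :
  cl a = vid Y -> cl b = vid Y -> csrc a = csrc b -> ctgt a = ctgt b ->
  cid (hunit Y) ** a = cid (hunit Y) ** b -> a = b.
Proof.
  intros Ha Hb Hs Ht E.
  assert (Ea := lunit_nat a). assert (Eb := lunit_nat b).
  rewrite Ha, hid_vid, E in Ea. rewrite Hb, hid_vid in Eb.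
  rewrite Hs, Ht in Ea. rewrite Ea in Eb.
  rewrite <- (@lunit_inv_lunit_vcc D a (csrc a)), <- (@lunit_inv_lunit_vcc D b (csrc b)) by reflexivity.
  congruence.
Qed.

Lemma runit_hcomp J K : ht J = hs K ->
  runit (hcomp J K) = assoc J K (hunit (ht K)) ;; (cid J ** runit K).
Proof.
  intros HJK. set (U := hunit (ht K)).
  assert (Pent := @pentagon D J K U U HJK ltac:(subst U; boundary) ltac:(subst U; boundary)).
  assert (T1 := @triangle D (hcomp J K) U ltac:(subst U; boundary)).
  assert (T2 := @triangle D K U ltac:(subst U; boundary)).
  assert (N1 := @assoc_nat D (cid J) (cid K) (lunit U) ltac:(boundary) ltac:(subst U; boundary)).
  assert (N2 := @assoc_nat D (cid J) (runit K) (cid U) ltac:(boundary) ltac:(subst U; boundary)).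
  subst U. boundary_simpl_in Pent. boundary_simpl_in T1. boundary_simpl_in T2.
  boundary_simpl_in N1. boundary_simpl_in N2.
  set (U := hunit (ht K)) in *.
  assert (E1 : (runit (hcomp J K) ** cid U) ;; assoc J K U
             = ((assoc J K U ;; (cid J ** runit K)) ** cid U) ;; assoc J K U).
  { rewrite <- T1, <- (hcc_cid HJK).
    rewrite <- vcc_assoc, N1, vcc_assoc, Pent by (subst U; boundary).
    rewrite <- (vcc_assoc (c := cid J ** (cid K ** lunit U))) by (subst U; boundary).
    rewrite (interchange (a := cid J)) by (subst U; boundary).
    rewrite T2, vcc_cid_l by (subst U; boundary).
    rewrite <- vcc_assoc, <- N2, vcc_assoc by (subst U; boundary).
    rewrite (interchange (b := cid U)), vcc_cid_r by (subst U; boundary). reflexivity. }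
  apply (hcc_cid_hunit_inj (Y := ht K)); try (subst U; boundary).
  apply (vcc_cancel_r (i := assoc J K U) (j := assoc_inv J K U)); try (subst U; boundary).
  all: try (subst U; boundary_simpl; apply assoc_iso1; boundary).
  all: exact E1.
Qed.

Lemma lunit_hunit X : lunit (hunit X) = runit (hunit X).
Proof.
  set (U := hunit X).
  assert (E2 := runit_hcomp (J:=U) (K:=U) ltac:(subst U; boundary)).
  assert (T := @triangle D U U ltac:(subst U; boundary)).
  assert (N := runit_nat (runit U)).
  subst U. boundary_simpl_in E2. boundary_simpl_in T. boundary_simpl_in N. set (U := hunit X) in *.
  assert (E3 : runit U ** cid U = runit (hcomp U U)).
  { apply (vcc_cancel_r (i := runit U) (j := runit_inv U)); try (subst U; boundary).
    all: try (subst U; boundary_simpl; apply runit_iso1_at; boundary).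
    all: try exact N. }
  rewrite E3, E2 in T.
  apply (cid_hunit_hcc_inj (Y := X)); try (subst U; boundary).
  apply (vcc_cancel_l (i := assoc U U U) (j := assoc_inv U U U)); try (subst U; boundary).
  all: try (subst U; boundary_simpl; apply assoc_iso2; boundary).
  all: try exact T.
Qed.

Lemma lunit_inv_hunit A : lunit_inv (hunit A) = runit_inv (hunit A).
Proof.
  rewrite <- (@vcc_cid_r D (lunit_inv (hunit A)) (hcomp (hunit A) (hunit A))) by boundary.
  rewrite <- (@runit_iso1_at D (hunit A) A) by boundary.
  rewrite vcc_assoc, <- lunit_hunit, lunit_iso2, vcc_cid_l by boundary. reflexivity.
Qed.

Lemma runit_inv_nat a : a ;; runit_inv (ctgt a) = runit_inv (csrc a) ;; (a ** hid (cr a)).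
Proof.
  apply (vcc_cancel_r (i := runit (ctgt a)) (j := runit_inv (ctgt a))); try boundary.
  - boundary_simpl. apply runit_iso1.
  - cell_simpl. rewrite runit_nat. cell_simpl. reflexivity.
Qed.

Lemma lunit_inv_nat a : a ;; lunit_inv (ctgt a) = lunit_inv (csrc a) ;; (hid (cl a) ** a).
Proof.
  apply (vcc_cancel_r (i := lunit (ctgt a)) (j := lunit_inv (ctgt a))); try boundary.
  - boundary_simpl. apply lunit_iso1.
  - cell_simpl. rewrite lunit_nat. cell_simpl. reflexivity.
Qed.

Lemma runit_inv_nat_at a J : ctgt a = J -> a ;; runit_inv J = runit_inv (csrc a) ;; (a ** hid (cr a)).
Proof. intros <-; apply runit_inv_nat. Qed.

Lemma lunit_inv_nat_at a J : ctgt a = J -> a ;; lunit_inv J = lunit_inv (csrc a) ;; (hid (cl a) ** a).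
Proof. intros <-; apply lunit_inv_nat. Qed.

End Unitors.

Section FramedComposites.
Variable D : DoubleCat.
Implicit Types (a b c x y al be : Cl D) (f g h k : Vm D) (J K L : Hm D) (A B X Y Z : Ob D).

Lemma vcc_as_framed_hcc_l c al K B :
  csrc c = K -> ctgt c = hunit B -> csrc al = hunit B -> ctgt al = hunit B ->
  lunit_inv K ;; ((hid (cl c) ;; al) ** (c ;; hid (cr al))) ;; runit (hunit B) = c ;; al.
Proof.
  intros H1 H2 H3 H4.
  assert (N1 := lunit_nat c). assert (N2 := runit_nat al).
  boundary_simpl_in N1. boundary_simpl_in N2.
  rewrite <- interchange by boundary. cell_simpl.
  rewrite N2, <- lunit_hunit. rewrite (vcc_assoc (a := hid (cl c) ** c)), N1 by boundary. cell_simpl. reflexivity.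
Qed.

Lemma vcc_as_framed_hcc_r c al K B :
  csrc c = K -> ctgt c = hunit B -> csrc al = hunit B -> ctgt al = hunit B ->
  runit_inv K ;; ((c ;; hid (cl al)) ** (hid (cr c) ;; al)) ;; runit (hunit B) = c ;; al.
Proof.
  intros H1 H2 H3 H4.
  assert (N1 := runit_nat c). assert (N2 := lunit_nat al).
  boundary_simpl_in N1. boundary_simpl_in N2.
  rewrite <- interchange by boundary. cell_simpl.
  rewrite <- lunit_hunit, N2, lunit_hunit.
  rewrite (vcc_assoc (a := c ** hid (cr c))), N1 by boundary. cell_simpl. reflexivity.
Qed.

Lemma lunit_inv_runit_inv_coh K :
  lunit_inv K ;; (cid (hunit (hs K)) ** runit_inv K) ;; assoc_inv (hunit (hs K)) K (hunit (ht K))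
  = runit_inv K ;; (lunit_inv K ** cid (hunit (ht K))).
Proof.
  assert (HK : runit_inv K ;; ((lunit_inv K ** cid (hunit (ht K))) ;; (assoc (hunit (hs K)) K (hunit (ht K))
      ;; (cid (hunit (hs K)) ** runit K))) = lunit_inv K).
  { assert (E := runit_hcomp (J := hunit (hs K)) (K := K) ltac:(boundary)).
    assert (N := runit_nat (lunit_inv K)). boundary_simpl_in E. boundary_simpl_in N.
    rewrite <- E. rewrite N. cell_simpl. reflexivity. }
  apply (vcc_cancel_r (i := assoc (hunit (hs K)) K (hunit (ht K)))
                      (j := assoc_inv (hunit (hs K)) K (hunit (ht K)))); try boundary.
  - boundary_simpl. apply assoc_iso1; boundary.
  - cell_simpl.
    apply (vcc_cancel_r (i := cid (hunit (hs K)) ** runit K)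
                        (j := cid (hunit (hs K)) ** runit_inv K)); try boundary.
    + cell_simpl. boundary_simpl. reflexivity.
    + cell_simpl. rewrite HK. reflexivity.
Qed.

Lemma lunit_inv_runit_inv_coh_vcc K r : csrc r = hcomp (hcomp (hunit (hs K)) K) (hunit (ht K)) ->
  lunit_inv K ;; ((cid (hunit (hs K)) ** runit_inv K) ;; (assoc_inv (hunit (hs K)) K (hunit (ht K)) ;; r))
  = runit_inv K ;; ((lunit_inv K ** cid (hunit (ht K))) ;; r).
Proof.
  intros H. assert (E := lunit_inv_runit_inv_coh K). rewrite !vcc_assoc by boundary. rewrite E. reflexivity.
Qed.

Lemma runit_hunit_coh Y :
  assoc (hunit Y) (hunit Y) (hunit Y) ;; ((cid (hunit Y) ** runit (hunit Y)) ;; runit (hunit Y))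
  = (runit (hunit Y) ** cid (hunit Y)) ;; runit (hunit Y).
Proof.
  assert (E := runit_hcomp (J := hunit Y) (K := hunit Y) ltac:(boundary)).
  assert (N := runit_nat (runit (hunit Y))). boundary_simpl_in E. boundary_simpl_in N.
  rewrite N, E. cell_simpl. reflexivity.
Qed.

Lemma triangle_inv_vcc K r : csrc r = hcomp (hcomp K (hunit (ht K))) (hunit (ht K)) ->
  (cid K ** lunit_inv (hunit (ht K))) ;; (assoc_inv K (hunit (ht K)) (hunit (ht K)) ;; r)
  = (runit_inv K ** cid (hunit (ht K))) ;; r.
Proof.
  intros H. rewrite !vcc_assoc by boundary. f_equal.
  set (U := hunit (ht K)).
  assert (T := @triangle D K U ltac:(subst U; boundary)). subst U. boundary_simpl_in T.
  apply (vcc_cancel_r (i := runit K ** cid (hunit (ht K))) (j := runit_inv K ** cid (hunit (ht K)))); try boundary.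
  - cell_simpl. boundary_simpl. reflexivity.
  - cell_simpl. rewrite <- T. cell_simpl. boundary_simpl. reflexivity.
Qed.

Lemma assoc_nat_inv a b c : cr a = cl b -> cr b = cl c ->
  a ** (b ** c) = assoc_inv (csrc a) (csrc b) (csrc c) ;; (((a ** b) ** c) ;; assoc (ctgt a) (ctgt b) (ctgt c)).
Proof.
  intros H1 H2. rewrite (assoc_nat H1 H2). cell_simpl. reflexivity.
Qed.

(* Composing cells into units horizontally and re-framing by unitors is associative; this is
   the bookkeeping behind composing 2-cells of V(K) with cells into a unit. *)
Lemma framed_hcc_assoc_l c al be K Y : csrc c = K -> ctgt c = hunit Y ->
  csrc al = hunit (hs K) -> ctgt al = hunit Y -> cr al = cl c ->
  csrc be = hunit (ht K) -> ctgt be = hunit Y -> cl be = cr c ->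
  lunit_inv K ;; ((al ** (runit_inv K ;; ((c ** be) ;; runit (hunit Y)))) ;; runit (hunit Y))
  = runit_inv K ;; (((lunit_inv K ;; ((al ** c) ;; runit (hunit Y))) ** be) ;; runit (hunit Y)).
Proof.
  intros H1 H2 H3 H4 H5 H6 H7 H8.
  rewrite (hcc_vcc_r_split_top (a := al) (b1 := runit_inv K)) by boundary.
  rewrite (hcc_vcc_r_split_bot (a := al) (b1 := c ** be)) by boundary.
  rewrite (assoc_nat_inv (a := al)) by boundary.
  rewrite (hcc_vcc_l_split_top (a1 := lunit_inv K)) by boundary.
  rewrite (hcc_vcc_l_split_bot (a1 := al ** c)) by boundary.
  boundary_simpl. cell_simpl.
  rewrite lunit_inv_runit_inv_coh_vcc by boundary. rewrite runit_hunit_coh. reflexivity.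
Qed.

Lemma framed_hcc_assoc_r c b1 b2 K Y : csrc c = K -> ctgt c = hunit Y ->
  csrc b1 = hunit (ht K) -> ctgt b1 = hunit Y -> cl b1 = cr c ->
  csrc b2 = hunit (ht K) -> ctgt b2 = hunit Y -> cl b2 = cr b1 ->
  runit_inv K ;; (((runit_inv K ;; ((c ** b1) ;; runit (hunit Y))) ** b2) ;; runit (hunit Y))
  = runit_inv K ;; ((c ** (lunit_inv (hunit (ht K)) ;; ((b1 ** b2) ;; runit (hunit Y)))) ;; runit (hunit Y)).
Proof.
  intros H1 H2 H3 H4 H5 H6 H7 H8.
  rewrite (hcc_vcc_l_split_top (a1 := runit_inv K)) by boundary.
  rewrite (hcc_vcc_l_split_bot (a1 := c ** b1)) by boundary.
  rewrite (hcc_vcc_r_split_top (a := c) (b1 := lunit_inv (hunit (ht K)))) by boundary.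
  rewrite (hcc_vcc_r_split_bot (a := c) (b1 := b1 ** b2)) by boundary.
  rewrite (assoc_nat_inv (a := c)) by boundary.
  boundary_simpl. cell_simpl. rewrite triangle_inv_vcc by boundary. rewrite runit_hunit_coh. reflexivity.
Qed.

End FramedComposites.

(* [Q] is a companion of [v] with unit [q] and counit [r]; the second identity is
   q (.) r = 1_Q up to the unitors. *)
Record companion_pair (D : DoubleCat) (v : Vm D) (Q : Hm D) (q r : Cl D) : Prop := {
  cp_unit_src : csrc q = hunit (hs Q);
  cp_unit_tgt : ctgt q = Q;
  cp_unit_l : cl q = vid (hs Q);
  cp_unit_r : cr q = v;
  cp_counit_src : csrc r = Q;
  cp_counit_tgt : ctgt r = hunit (ht Q);
  cp_counit_l : cl r = v;
  cp_counit_r : cr r = vid (ht Q);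
  cp_vcc : q ;; r = hid v;
  cp_hcc : lunit_inv Q ;; ((q ** r) ;; runit Q) = cid Q }.

Section Opcartesian.
Variable D : DoubleCat.
Implicit Types (a b c x y q r t o ph : Cl D) (f g h k v : Vm D) (J K L P Q : Hm D).

Lemma companion_pair_hcc v Q q r : companion_pair v Q q r -> (q ** r) ;; runit Q = lunit Q.
Proof.
  intros [H1 H2 H3 H4 H5 H6 H7 H8 Z1 Z2].
  rewrite <- (@lunit_lunit_inv_vcc D ((q ** r) ;; runit Q) Q) by boundary. rewrite Z2. cell_simpl. reflexivity.
Qed.

Lemma opcartesian_companion_unit v Q q r : companion_pair v Q q r -> opcartesian q.
Proof.
  intros CP; destruct CP as [H1 H2 H3 H4 H5 H6 H7 H8 Z1 Z2].
  assert (Lq : q ;; lunit_inv Q = lunit_inv (hunit (hs Q)) ;; (cid (hunit (hs Q)) ** q)).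
  { assert (N := lunit_nat q). boundary_simpl_in N.
    apply (vcc_cancel_r (i := lunit Q) (j := lunit_inv Q)); try boundary.
    - boundary_simpl. apply lunit_iso1_at. boundary.
    - cell_simpl. rewrite N. cell_simpl. reflexivity. }
  intros x h k Hx Hh Hk Hl Hr.
  boundary_simpl_in Hx. boundary_simpl_in Hh. boundary_simpl_in Hk. boundary_simpl_in Hl. boundary_simpl_in Hr.
  exists (lunit_inv Q ;; ((x ** (r ;; hid k)) ;; runit (ctgt x))). split; [repeat split|].
  1-4: boundary.
  - rewrite_vcc Lq. cell_simpl. rewrite (vcc_assoc (a := cid (hunit (hs Q)) ** q)) by boundary.
    rewrite interchange by boundary. rewrite (vcc_assoc (a := q)), Z1, hid_vcomp by boundary.
    rewrite vcc_cid_l by boundary.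
    assert (N := runit_nat x). boundary_simpl_in N. rewrite N. rewrite lunit_inv_hunit. cell_simpl. reflexivity.
  - intros t [T1 [T2 [T3 [T4 T5]]]].
    rewrite <- T5. boundary_simpl.
    rewrite <- (interchange (a := q) (b := r)) by boundary.
    assert (N := runit_nat t). boundary_simpl_in N. cell_simpl. rewrite N.
    rewrite_vcc Z2. cell_simpl. reflexivity.
Qed.

Lemma opcartesian_companion_unit_whisker v P Q q r : companion_pair v Q q r ->
  ht P = hs Q -> opcartesian (runit_inv P ;; (cid P ** q)).
Proof.
  intros CP HPQ. assert (Lq := companion_pair_hcc CP).
  destruct CP as [H1 H2 H3 H4 H5 H6 H7 H8 Z1 Z2].
  intros x h k Hx Hh Hk Hl Hr.
  boundary_simpl_in Hx. boundary_simpl_in Hh. boundary_simpl_in Hk. boundary_simpl_in Hl. boundary_simpl_in Hr.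
  learn_side_boundaries.
  exists ((x ** (r ;; hid k)) ;; runit (ctgt x)). split; [repeat split|].
  1-4: boundary.
  - cell_simpl. rewrite (vcc_assoc (a := cid P ** q)) by boundary.
    rewrite interchange by boundary. rewrite (vcc_assoc (a := q)), Z1, hid_vcomp by boundary.
    rewrite vcc_cid_l by boundary.
    assert (N := runit_nat x). boundary_simpl_in N. rewrite N. cell_simpl. reflexivity.
  - intros t [T1 [T2 [T3 [T4 T5]]]].
    rewrite <- T5. boundary_simpl.
    rewrite <- (interchange (a := runit_inv P ;; (cid P ** q)) (b := r)) by boundary.
    assert (N := runit_nat t). boundary_simpl_in N. cell_simpl. rewrite N.
    assert (W : ((runit_inv P ;; (cid P ** q)) ** r) ;; runit (hcomp P Q) = cid (hcomp P Q)).
    { rewrite (hcc_vcc_l_split_top (a1 := runit_inv P)) by boundary.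
      rewrite (runit_hcomp HPQ).
      assert (N2 := assoc_nat (a := cid P) (b := q) (c := r) ltac:(boundary) ltac:(boundary)).
      boundary_simpl_in N2. cell_simpl. rewrite_vcc N2. cell_simpl. rewrite Lq.
      assert (T := @triangle D P Q HPQ). boundary_simpl_in T. rewrite T.
      boundary_simpl. cell_simpl. boundary_simpl. reflexivity. }
    rewrite_vcc W. cell_simpl. reflexivity.
Qed.

Lemma opcartesian_vcc a b : opcartesian a -> opcartesian b -> ctgt a = csrc b -> opcartesian (a ;; b).
Proof.
  intros Oa Ob Hab x h k Hx Hh Hk Hl Hr.
  boundary_simpl_in Hx. boundary_simpl_in Hh. boundary_simpl_in Hk. boundary_simpl_in Hl. boundary_simpl_in Hr.
  destruct (Oa x (vcomp h (cl b)) (vcomp k (cr b))) as [t1 [[S1 [S2 [S3 [S4 S5]]]] U1]]; try boundary.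
  destruct (Ob t1 h k) as [t2 [[R1 [R2 [R3 [R4 R5]]]] U2]]; try boundary.
  exists t2. split; [repeat split|].
  1-4: boundary.
  - rewrite <- (vcc_assoc (a:=a) (b:=b) (c:=t2)) by boundary. rewrite R5. exact S5.
  - intros t' [T1 [T2 [T3 [T4 T5]]]].
    apply U2. repeat split; try boundary.
    symmetry. apply U1. repeat split; try boundary.
    rewrite vcc_assoc by boundary. exact T5.
Qed.

Lemma invertible_of_opcartesian_vcc o1 o2 ph : o1 ;; ph = o2 ->
  ctgt o1 = csrc ph -> cl ph = vid (hs (csrc ph)) -> cr ph = vid (ht (csrc ph)) ->
  opcartesian o1 -> opcartesian o2 -> invertible_cell ph.
Proof.
  intros E H1 H2 H3 O1 O2.
  destruct (O2 o1 (vid (hs (csrc ph))) (vid (ht (csrc ph)))) as [ps [[S1 [S2 [S3 [S4 S5]]]] U]];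
    try (subst o2; boundary).
  exists ps. split; [|split; [|split]]; try (subst o2; boundary).
  - destruct (O1 o1 (vid (hs (csrc ph))) (vid (ht (csrc ph)))) as [t [_ U1]]; try boundary.
    rewrite <- (U1 (ph ;; ps)), <- (U1 (cid (csrc ph))); auto; repeat split; try (subst o2; boundary).
    all: first [ rewrite vcc_cid_r by (subst o2; boundary); reflexivity
               | rewrite vcc_assoc by (subst o2; boundary); rewrite ?E, ?S5;
                 first [reflexivity | exact S5 | exact E] ].
  - destruct (O2 o2 (vid (hs (csrc ph))) (vid (ht (csrc ph)))) as [t [_ U2]]; try (subst o2; boundary).
    rewrite <- (U2 (ps ;; ph)), <- (U2 (cid (ctgt ph))); auto; repeat split; try (subst o2; boundary).
    all: first [ rewrite vcc_cid_r by (subst o2; boundary); reflexivity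
               | rewrite vcc_assoc by (subst o2; boundary); rewrite ?E, ?S5;
                 first [reflexivity | exact S5 | exact E] ].
Qed.

End Opcartesian.

Section EquipmentCompanions.
Variable E : Equipment.
Implicit Types (f g : Vm E).

Lemma companion_pair_compL_compR f : companion_pair f (companion f) (compL f) (compR f).
Proof.
  split; try boundary; [apply compLR |].
  destruct (compR_cart (f := f) (x := compR f) (h := vid (vdom f)) (k := vid (vcod f))) as [t [_ U]];
    try boundary.
  transitivity t; [symmetry|]; apply U; repeat split; try boundary; try (cell_simpl; reflexivity).
  assert (N1 := runit_nat (compR f)). assert (N2 := lunit_nat (compR f)).
  boundary_simpl_in N1. boundary_simpl_in N2. cell_simpl. rewrite <- N1. cell_simpl.
  rewrite (vcc_assoc (a := compL f ** compR f)) by boundary.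
  rewrite interchange, compLR, vcc_cid_r by boundary. rewrite <- lunit_hunit. rewrite N2. cell_simpl. reflexivity.
Qed.

End EquipmentCompanions.

Section ConjointOfRightAdjoint.
Variable E : Equipment.
Variables (g f : Vm E) (eta eps th : Cl E).
Hypotheses (Hfd : vdom f = vcod g) (Hfc : vcod f = vdom g)
  (He1 : csrc eta = hunit (vcod g)) (He2 : ctgt eta = hunit (vcod g))
  (He3 : cl eta = vid (vcod g)) (He4 : cr eta = vcomp g f)
  (Hp1 : csrc eps = hunit (vdom g)) (Hp2 : ctgt eps = hunit (vdom g))
  (Hp3 : cl eps = vcomp f g) (Hp4 : cr eps = vid (vdom g))
  (T1 : v2comp (vcc eta (hid f)) (vcc (hid f) eps) = hid f)
  (T2 : v2comp (vcc (hid g) eta) (vcc eps (hid g)) = hid g).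
Hypotheses (S1 : csrc th = hunit (vcod g)) (S2 : ctgt th = conjoint g)
  (S3 : cl th = vid (vcod g)) (S4 : cr th = f) (S5 : th ;; conjR g = eta).

Definition conjoint_counit : Cl E :=
  runit_inv (conjoint g) ;; (((conjR g ;; hid f) ** eps) ;; runit (hunit (vdom g))).

Lemma conjoint_unit_counit_vcc : th ;; conjoint_counit = hid f.
Proof.
  unfold conjoint_counit.
  rewrite (vcc_assoc (a := th)) by boundary.
  rewrite runit_inv_nat_at by boundary. boundary_simpl. cell_simpl.
  rewrite (vcc_assoc (a := th ** hid f)) by boundary.
  rewrite interchange by boundary. rewrite (vcc_assoc (a := th)), S5 by boundary.
  unfold v2comp in T1. boundary_simpl_in T1. rewrite lunit_hunit, lunit_inv_hunit in T1.
  rewrite vcc_assoc by boundary. exact T1.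
Qed.

Lemma conjoint_unit_counit_hcc :
  lunit_inv (conjoint g) ;; ((th ** conjoint_counit) ;; runit (conjoint g)) = cid (conjoint g).
Proof.
  unfold conjoint_counit.
  destruct (conjR_cart (g := g) (x := conjR g) (h := vid (vcod g)) (k := vid (vdom g))) as [t [_ U]].
  all: try boundary.
  transitivity t; [symmetry|]; apply U; repeat split; try boundary; try (cell_simpl; reflexivity).
  cell_simpl.
  assert (N := runit_nat (conjR g)). boundary_simpl_in N. rewrite <- N.
  rewrite (vcc_assoc (a := th ** _)) by boundary. rewrite interchange by boundary.
  rewrite S5.
  assert (N3 := runit_nat (hid g)). boundary_simpl_in N3. cell_simpl. rewrite <- N3.
  rewrite (vcc_assoc (a := (conjR g ;; hid f) ** eps)) by boundary. rewrite interchange by boundary.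
  rewrite <- (vcc_assoc (a := conjR g)), hid_vcomp by boundary.
  rewrite (framed_hcc_assoc_l (c := conjR g ;; hid (vcomp g f)) (al := eta) (be := eps ;; hid g)
             (K := conjoint g) (Y := vcod g)) by boundary.
  assert (W1 := vcc_as_framed_hcc_l (c := conjR g) (al := eta) (K := conjoint g) (B := vcod g)
                  ltac:(boundary) ltac:(boundary) ltac:(boundary) ltac:(boundary)).
  assert (W2 := vcc_as_framed_hcc_r (c := conjR g) (al := eta) (K := conjoint g) (B := vcod g)
                  ltac:(boundary) ltac:(boundary) ltac:(boundary) ltac:(boundary)).
  boundary_simpl_in W1. cell_simpl_in W1. boundary_simpl_in W2. cell_simpl_in W2.
  rewrite W1, <- W2.
  rewrite (framed_hcc_assoc_r (c := conjR g) (b1 := hid g ;; eta) (b2 := eps ;; hid g)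
             (K := conjoint g) (Y := vcod g)) by boundary.
  unfold v2comp in T2. boundary_simpl_in T2. rewrite lunit_hunit in T2. cell_simpl_in T2.
  boundary_simpl. rewrite T2.
  rewrite N. cell_simpl. reflexivity.
Qed.

End ConjointOfRightAdjoint.

Lemma companion_pair_conjoint_of_left_adjoint (E : Equipment) (g : Vm E) :
  has_left_adjoint g -> exists f th rh, companion_pair f (conjoint g) th rh.
Proof.
  intros [f [eta [eps [Hfd [Hfc [He1 [He2 [He3 [He4 [Hp1 [Hp2 [Hp3 [Hp4 [T1 T2]]]]]]]]]]]]]].
  destruct (conjR_cart (g := g) (x := eta) (h := vid (vcod g)) (k := f))
    as [th [[S1 [S2 [S3 [S4 S5]]]] _]]; try boundary.
  boundary_simpl_in S1. boundary_simpl_in S2. boundary_simpl_in S3. boundary_simpl_in S4.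
  exists f, th, (conjoint_counit g f eps).
  split; try (unfold conjoint_counit; boundary).
  - apply conjoint_unit_counit_vcc with eta; assumption.
  - apply conjoint_unit_counit_hcc with eta; assumption.
Qed.

Section NormalLaxCompanions.
Variables (D : DoubleCat) (F : LaxData D).
Hypothesis HF : is_normal_lax F.
Implicit Types (q r : Cl D) (v : Vm D) (Q : Hm D).

Lemma companion_pair_lax v Q q r : companion_pair v Q q r ->
  companion_pair (FV F v) (FH F Q) (FC F q) (FC F r).
Proof.
  intros CP. assert (Lq := companion_pair_hcc CP).
  destruct CP as [H1 H2 H3 H4 H5 H6 H7 H8 Z1 Z2].
  split; try boundary.
  - rewrite <- (FC_vcc HF) by boundary. rewrite Z1. apply (FC_hid HF).
  - assert (Nn := Fcmp_nat HF (a := q) (b := r) ltac:(boundary)).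
    assert (Nr := Fcmp_runit HF Q). assert (Nl := Fcmp_lunit HF Q).
    boundary_simpl_in Nn. boundary_simpl_in Nr. boundary_simpl_in Nl.
    assert (Fl : Fcmp F (hunit (hs Q)) Q = lunit (FH F Q) ;; FC F (lunit_inv Q)).
    { rewrite <- Nl. rewrite <- vcc_assoc by boundary. rewrite <- (FC_vcc HF) by boundary.
      rewrite lunit_iso1, (FC_cid HF). boundary_simpl. rewrite vcc_cid_r by boundary. reflexivity. }
    rewrite <- Nr. rewrite_vcc Nn. rewrite Fl. cell_simpl.
    rewrite <- !(FC_vcc HF) by boundary. rewrite Z2. apply (FC_cid HF).
Qed.

End NormalLaxCompanions.

Section UnitFactorization.
Variables (E : Equipment) (M : NLaxDoubleMonad E).
Variables (J : Hm E) (th : Cl E).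
Hypotheses (S1 : csrc th = hunit (hs J)) (S2 : ctgt th = J) (S3 : cl th = vid (hs J)).

Lemma iota_lower_factorization :
  (th ;; (runit_inv J ;; (cid J ** compL (iotaO M (ht J))))) ;; iota_lower M J
  = compL (iotaO M (hs J)) ;; (runit_inv (companion (iotaO M (hs J)))
       ;; (cid (companion (iotaO M (hs J))) ** FC (Tm M) th)).
Proof.
  unfold iota_lower. boundary_simpl. cell_simpl.
  rewrite (vcc_assoc (a := cid J ** compL (iotaO M (ht J)))) by boundary.
  rewrite interchange by boundary. cell_simpl.
  rewrite (vcc_assoc (a := lunit_inv J ** compL (iotaO M (ht J)))) by boundary.
  rewrite interchange by boundary. rewrite compLR.
  match goal with |- context [ (?Y ** hid (iotaO M (ht J))) ;; ?R ] =>
    assert (N := runit_nat Y); boundary_simpl_in N; rewrite N end.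
  cell_simpl.
  rewrite (vcc_assoc (a := th)) by boundary. rewrite lunit_inv_nat_at by boundary. boundary_simpl. cell_simpl.
  rewrite interchange by boundary. cell_simpl.
  assert (Nt := tr_natC (iota_trans M) th). cbn [FC lax_id] in Nt. boundary_simpl_in Nt. rewrite Nt.
  rewrite (vcc_assoc (a := compL (iotaO M (hs J)))) by boundary.
  rewrite runit_inv_nat_at by boundary. boundary_simpl. cell_simpl.
  rewrite interchange by boundary. cell_simpl. rewrite lunit_inv_hunit. reflexivity.
Qed.

End UnitFactorization.

Lemma right_BC_of_companion_pair (E : Equipment) (M : NLaxDoubleMonad E) v J th rh :
  companion_pair v J th rh -> right_BC M J.
Proof.
  intros CP. assert (TCP := companion_pair_lax (Tm_lax M) CP).
  assert (Oth := opcartesian_companion_unit CP).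
  destruct CP as [S1 S2 S3 S4 R1 R2 R3 R4 Z1 Z2].
  apply (invertible_of_opcartesian_vcc (iota_lower_factorization M S1 S2 S3)); try (unfold iota_lower; boundary).
  - apply opcartesian_vcc; [exact Oth | | boundary].
    apply (opcartesian_companion_unit_whisker (companion_pair_compL_compR (iotaO M (ht J)))); boundary.
  - apply opcartesian_vcc; [apply compL_opcart | | boundary].
    apply (opcartesian_companion_unit_whisker TCP); boundary.
Qed.

Theorem corollary5p7 (E : Equipment) (M : NLaxDoubleMonad E) (g : Vm E) :
  has_left_adjoint g -> right_BC M (conjoint g).
Proof.
  intros Hadj.
  destruct (companion_pair_conjoint_of_left_adjoint Hadj) as [f [th [rh CP]]].
  exact (right_BC_of_companion_pair M CP).
Qed.
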